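(* Let $G(s)\in\mathbb{C}(s)^{n\times n}$ be a strictly proper complex rational transfer function of McMillan degree $\delta$ with $G(s)=G(s)^t$. Then: (1) $G(s)$ has a controllable and observable complex symmetric realization, i.e. there exist $A\in\mathbb{C}^{\delta\times\delta}$ with $A=A^t$, $B\in\mathbb{C}^{\delta\times n}$ and $C=B^t$ such that $G(s)=C(sI_\delta-A)^{-1}B$ and $(A,B,C)$ is controllable and observable; equivalently $(A,B,C)=(A^t,C^t,B^t)$. (2) If $(A_i,B_i,C_i)$, $i=1,2$, are two controllable and observable complex symmetric realizations of $G(s)$ (so $A_i=A_i^t$, $C_i=B_i^t$), then there exists a unique $S\in O(\delta,\mathbb{C})$ such that $(A_2,B_2,C_2)=(SA_1S^{-1},SB_1,C_1S^{-1})$.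
   Context: $O(\delta,\mathbb{C})=\{S\in\mathbb{C}^{\delta\times\delta}: SS^t=I_\delta\}$ is the complex orthogonal group. A realization of $G$ is a triple $(A,B,C)$ with $G(s)=C(sI-A)^{-1}B$; the McMillan degree is the state dimension of a controllable and observable (minimal) realization. *)

(* The field of complex numbers is modelled by an arbitrary
   numClosedFieldType C (algebraically closed, characteristic 0, with conjugation);
   the complex numbers are an instance. *)
From HB Require Import structures.
From mathcomp Require Import all_boot all_order all_algebra.
Set Implicit Arguments. Unset Strict Implicit. Unset Printing Implicit Defensive.
Import Order.TTheory GRing.Theory Num.Theory.
Local Open Scope ring_scope.

Notation ratf C := {fraction {poly C}}.

Definition polyF (C : numClosedFieldType) (p : {poly C}) : ratf C :=
  FracField.tofrac p.

Definition sIminus (C : numClosedFieldType) (d : nat) (A : 'M[C]_d) : 'M[ratf C]_d :=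
  \matrix_(i, j) polyF ('X *+ (i == j) - (A i j)%:P).

Definition transfer (C : numClosedFieldType) (d m p : nat)
  (A : 'M[C]_d) (B : 'M[C]_(d, m)) (Cm : 'M[C]_(p, d)) : 'M[ratf C]_(p, m) :=
  map_mx (fun c => polyF c%:P) Cm *m invmx (sIminus A) *m map_mx (fun c => polyF c%:P) B.

Definition is_realization (C : numClosedFieldType) (d m p : nat)
  (G : 'M[ratf C]_(p, m)) (A : 'M[C]_d) (B : 'M[C]_(d, m)) (Cm : 'M[C]_(p, d)) : Prop :=
  G = transfer A B Cm.

(* Kalman rank condition: the columns of B, AB, ..., A^(d-1)B span C^d
   (columns of A^i B are the rows of (A^i B)^T). *)
Definition controllable (C : numClosedFieldType) (d m : nat)
  (A : 'M[C]_d) (B : 'M[C]_(d, m)) : bool :=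
  row_full (\sum_(i < d) <<(A ^+ i *m B)^T>>)%MS.

Definition observable (C : numClosedFieldType) (d p : nat)
  (A : 'M[C]_d) (Cm : 'M[C]_(p, d)) : bool :=
  row_full (\sum_(i < d) <<Cm *m A ^+ i>>)%MS.

Definition minimal_realization (C : numClosedFieldType) (d m p : nat)
  (G : 'M[ratf C]_(p, m)) (A : 'M[C]_d) (B : 'M[C]_(d, m)) (Cm : 'M[C]_(p, d)) : Prop :=
  [/\ is_realization G A B Cm, controllable A B & observable A Cm].

Definition mcmillan_degree (C : numClosedFieldType) (m p : nat)
  (G : 'M[ratf C]_(p, m)) (d : nat) : Prop :=
  exists (A : 'M[C]_d) (B : 'M[C]_(d, m)) (Cm : 'M[C]_(p, d)),
    minimal_realization G A B Cm.

Definition strictly_proper_ratf (C : numClosedFieldType) (f : ratf C) : Prop :=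
  exists (p q : {poly C}), [/\ q != 0, (size p < size q)%N & f = polyF p / polyF q].

Definition strictly_proper (C : numClosedFieldType) (m p : nat)
  (G : 'M[ratf C]_(p, m)) : Prop :=
  forall i j, strictly_proper_ratf (G i j).

Definition orthogonal_mx (C : numClosedFieldType) (d : nat) (S : 'M[C]_d) : Prop :=
  S *m S^T = 1%:M.

From HB Require Import structures.
From mathcomp Require Import all_boot all_order all_algebra.
From mathcomp Require Import zify.
Set Implicit Arguments. Unset Strict Implicit. Unset Printing Implicit Defensive.
Import Order.TTheory GRing.Theory Num.Theory.
Local Open Scope ring_scope.

(* Equal transfer functions have equal Markov parameters [C A^k B], since
   [(sI - A)^-1 = \sum_k A^k s^(-k-1)] at infinity, and two minimal realizations
   with equal Markov parameters are related by a unique state isomorphism [S]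
   ([S A1 = A2 S], [S B1 = B2], [C1 = C2 S]), fixed by its action on the
   controllability matrix. If [G = G^T], then [(A^T, C^T, B^T)] is again a
   minimal realization; by uniqueness the isomorphism [T] onto it is symmetric,
   so [T = R^T R] over an algebraically closed field, and [(R A R^-1, R B, C R^-1)]
   is a symmetric realization. For two symmetric realizations, [S] and
   [(S^T)^-1] are both isomorphisms, so [S] is orthogonal. *)

Section TransferFunction.
Variable C : numClosedFieldType.
Local Notation tf := (@FracField.tofrac {poly C}).
Local Notation rat_const := (fun c : C => polyF c%:P).

Lemma map_rat_constE m n (X : 'M[C]_(m, n)) :
  map_mx rat_const X = map_mx tf (map_mx polyC X).
Proof. by apply/matrixP=> i j; rewrite !mxE. Qed.

Lemma map_rat_constM m n p (X : 'M[C]_(m, n)) (Y : 'M[C]_(n, p)) :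
  map_mx rat_const (X *m Y) = map_mx rat_const X *m map_mx rat_const Y.
Proof. by rewrite !map_rat_constE !map_mxM. Qed.

Lemma map_rat_const1 d : map_mx rat_const (1%:M : 'M[C]_d) = 1%:M.
Proof. by rewrite map_rat_constE !map_mx1. Qed.

Lemma sIminus_char_poly_mx d (A : 'M[C]_d) :
  sIminus A = map_mx tf (char_poly_mx A).
Proof. by apply/matrixP=> i j; rewrite !mxE. Qed.

Lemma sIminusE d (A : 'M[C]_d) :
  sIminus A = polyF 'X *: 1%:M - map_mx rat_const A.
Proof.
apply/matrixP=> i j; rewrite !mxE /polyF rmorphB /=; congr (_ - _).
by rewrite rmorphMn mulr_natr.
Qed.

Lemma sIminus_unitmx d (A : 'M[C]_d) : sIminus A \in unitmx.
Proof.
rewrite sIminus_char_poly_mx unitmxE det_map_mx unitfE tofrac_eq0.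
by rewrite monic_neq0 // char_poly_monic.
Qed.

Lemma invmx_sIminus d (A : 'M[C]_d) :
  invmx (sIminus A) = (tf (char_poly A))^-1 *: map_mx tf (\adj (char_poly_mx A)).
Proof.
by rewrite /invmx sIminus_unitmx sIminus_char_poly_mx det_map_mx map_mx_adj.
Qed.

Lemma size_det_linear_mx k (M : 'M[{poly C}]_k) :
  (forall i j, size (M i j) <= 2)%N -> (size (\det M) <= k.+1)%N.
Proof.
move=> M_le2; apply: leq_trans (size_sum _ _ _) _; apply/bigmax_leqP=> s _.
rewrite size_Msign -[k in (_ <= k.+1)%N]card_ord -sum1_card.
apply: (big_ind2 (fun (p : {poly C}) (m : nat) => size p <= m.+1)%N).
- by rewrite size_poly1.
- move=> p mp q mq le_p le_q; apply: leq_trans (size_polyMleq _ _) _; lia.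
- by move=> j _; apply: M_le2.
Qed.

Lemma size_adj_char_poly_mx d (A : 'M[C]_d) i j :
  (size (\adj (char_poly_mx A) i j) <= d)%N.
Proof.
rewrite mxE /cofactor size_Msign.
have dE : d.-1.+1 = d by case: d A i j => // A [].
rewrite -[X in (_ <= X)%N]dE; apply: size_det_linear_mx => k l; rewrite !mxE.
case: (_ == _); rewrite ?mulr1n ?mulr0n ?sub0r ?size_polyN ?size_polyC.
  apply: leq_trans (size_polyD _ _) _.
  by rewrite size_polyX size_polyN size_polyC geq_max /=; case: (_ != 0).
by case: (_ != 0).
Qed.

Lemma size_polyC_mulmx m n p (X : 'M[C]_(m, n)) (M : 'M[{poly C}]_(n, p)) k :
  (forall i j, size (M i j) <= k)%N ->
  forall i j, (size ((map_mx polyC X *m M) i j) <= k)%N.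
Proof.
move=> M_le i j; rewrite mxE; apply: leq_trans (size_sum _ _ _) _.
by apply/bigmax_leqP=> l _; rewrite mxE mul_polyC (leq_trans (size_scale_leq _ _)).
Qed.

Lemma size_mulmx_polyC m n p (M : 'M[{poly C}]_(m, n)) (X : 'M[C]_(n, p)) k :
  (forall i j, size (M i j) <= k)%N ->
  forall i j, (size ((M *m map_mx polyC X) i j) <= k)%N.
Proof.
move=> M_le i j; rewrite mxE; apply: leq_trans (size_sum _ _ _) _.
by apply/bigmax_leqP=> l _; rewrite mxE mulrC mul_polyC (leq_trans (size_scale_leq _ _)).
Qed.

(* [s^k (transfer A B Cm - \sum_(i < k) Cm A^i B s^(-i-1))], the tail of the
   expansion of the transfer function at infinity. *)
Definition markov_tail d m p (A : 'M[C]_d) (B : 'M[C]_(d, m)) (Cm : 'M[C]_(p, d)) k :=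
  map_mx rat_const (Cm *m A ^+ k) *m invmx (sIminus A) *m map_mx rat_const B.

Lemma markov_tail0 d m p (A : 'M[C]_d) (B : 'M[C]_(d, m)) (Cm : 'M[C]_(p, d)) :
  markov_tail A B Cm 0 = transfer A B Cm.
Proof. by rewrite /markov_tail expr0 mulmx1. Qed.

Lemma markov_tailS d m p (A : 'M[C]_d) (B : 'M[C]_(d, m)) (Cm : 'M[C]_(p, d)) k :
  polyF 'X *: markov_tail A B Cm k =
  map_mx rat_const (Cm *m A ^+ k *m B) + markov_tail A B Cm k.+1.
Proof.
set R := invmx (sIminus A).
have sR : polyF 'X *: R = 1%:M + map_mx rat_const A *m R.
  have := mulmxV (sIminus_unitmx A); rewrite -/R sIminusE mulmxBl -scalemxAl mul1mx.
  by move=> <-; rewrite subrK.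
rewrite /markov_tail -/R scalemxAl scalemxAr sR mulmxDr mulmxDl mulmx1.
by rewrite map_rat_constM !mulmxA -!map_rat_constM exprSr -mulmxE mulmxA.
Qed.

Lemma markov_tail_proper d m p (A : 'M[C]_d) (B : 'M[C]_(d, m))
    (Cm : 'M[C]_(p, d)) k i j :
  strictly_proper_ratf (markov_tail A B Cm k i j).
Proof.
pose Q := map_mx polyC (Cm *m A ^+ k) *m \adj (char_poly_mx A) *m map_mx polyC B.
exists (Q i j), (char_poly A); split.
- by rewrite monic_neq0 // char_poly_monic.
- rewrite size_char_poly ltnS; apply: size_mulmx_polyC => i' j'.
  exact/size_polyC_mulmx/size_adj_char_poly_mx.
have -> : markov_tail A B Cm k = (tf (char_poly A))^-1 *: map_mx tf Q.
  by rewrite /markov_tail invmx_sIminus !map_rat_constE -scalemxAr -scalemxAl !map_mxM.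
by rewrite !mxE mulrC.
Qed.

(* Comparing degrees in [c x1 x2 = q1 x2 - q2 x1]. *)
Lemma proper_ratfB_const_eq0 (c : C) (f g : ratf C) :
  strictly_proper_ratf f -> strictly_proper_ratf g -> polyF c%:P = f - g -> c = 0.
Proof.
move=> [q1 [x1 [x1_neq0 lt1 ->]]] [q2 [x2 [x2_neq0 lt2 ->]]] cE.
have E : c%:P * x1 * x2 = q1 * x2 - q2 * x1.
  apply/eqP; rewrite -tofrac_eq; apply/eqP.
  have tx1 : tf x1 != 0 by rewrite tofrac_eq0.
  have tx2 : tf x2 != 0 by rewrite tofrac_eq0.
  rewrite tofracB !tofracM -/(polyF _) cE !mulrBl (divfK tx1).
  by rewrite [_ / tf x2 * _ * _]mulrAC (divfK tx2).
apply/eqP; apply: contraT => c_neq0.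
have x1_gt0 : (0 < size x1)%N by rewrite size_poly_gt0.
have x2_gt0 : (0 < size x2)%N by rewrite size_poly_gt0.
(* The sizes below live in different ring instances, so lia sees distinct atoms. *)
have ltn_predD a b e : (a < b -> 0 < e -> (a + e).-1 < (b + e).-1)%N by lia.
have := size_polyD (q1 * x2) (- (q2 * x1)).
rewrite size_polyN -E -mulrA size_Cmul // size_mul // leqNgt gtn_max.
rewrite !(leq_ltn_trans (size_polyMleq _ _)) ?ltn_predD //.
by rewrite [in X in (_ < X)%N]addnC ltn_predD.
Qed.

Lemma markov_tail_eqS d1 d2 m p
    (A1 : 'M[C]_d1) (B1 : 'M[C]_(d1, m)) (C1 : 'M[C]_(p, d1))
    (A2 : 'M[C]_d2) (B2 : 'M[C]_(d2, m)) (C2 : 'M[C]_(p, d2)) k :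
  markov_tail A1 B1 C1 k = markov_tail A2 B2 C2 k ->
  C1 *m A1 ^+ k *m B1 = C2 *m A2 ^+ k *m B2 /\
  markov_tail A1 B1 C1 k.+1 = markov_tail A2 B2 C2 k.+1.
Proof.
move=> Ek.
have E : map_mx rat_const (C1 *m A1 ^+ k *m B1) + markov_tail A1 B1 C1 k.+1 =
         map_mx rat_const (C2 *m A2 ^+ k *m B2) + markov_tail A2 B2 C2 k.+1.
  by rewrite -!markov_tailS Ek.
suff Mk : C1 *m A1 ^+ k *m B1 = C2 *m A2 ^+ k *m B2.
  by split=> //; move: E; rewrite Mk => /addrI.
apply/matrixP=> i j; apply: subr0_eq.
apply: (proper_ratfB_const_eq0 (markov_tail_proper A2 B2 C2 k.+1 i j)
                               (markov_tail_proper A1 B1 C1 k.+1 i j)).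
move/matrixP/(_ i j): E; rewrite !mxE /polyF polyCB tofracB.
by move/(canRL (addrK _)) => ->; rewrite addrAC (addrC (tofrac _)) addrK.
Qed.

Lemma transfer_eq_markov d1 d2 m p
    (A1 : 'M[C]_d1) (B1 : 'M[C]_(d1, m)) (C1 : 'M[C]_(p, d1))
    (A2 : 'M[C]_d2) (B2 : 'M[C]_(d2, m)) (C2 : 'M[C]_(p, d2)) :
  transfer A1 B1 C1 = transfer A2 B2 C2 ->
  forall k, C1 *m A1 ^+ k *m B1 = C2 *m A2 ^+ k *m B2.
Proof.
rewrite -!markov_tail0 => E0.
have Ek k : markov_tail A1 B1 C1 k = markov_tail A2 B2 C2 k.
  by elim: k => // k IH; case: (markov_tail_eqS IH).
by move=> k; case: (markov_tail_eqS (Ek k)).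
Qed.

Lemma sIminus_tr d (A : 'M[C]_d) : sIminus A^T = (sIminus A)^T.
Proof. by apply/matrixP=> i j; rewrite !mxE eq_sym. Qed.

Lemma transfer_tr d m p (A : 'M[C]_d) (B : 'M[C]_(d, m)) (Cm : 'M[C]_(p, d)) :
  transfer A^T Cm^T B^T = (transfer A B Cm)^T.
Proof. by rewrite /transfer sIminus_tr -trmx_inv !trmx_mul !map_trmx !mulmxA. Qed.

Lemma transfer_similar d m p (A : 'M[C]_d) (B : 'M[C]_(d, m)) (Cm : 'M[C]_(p, d)) R :
  R \in unitmx ->
  transfer (R *m A *m invmx R) (R *m B) (Cm *m invmx R) = transfer A B Cm.
Proof.
move=> R_unit; set P := map_mx rat_const R; set P' := map_mx rat_const (invmx R).
have PP' : P *m P' = 1%:M by rewrite -map_rat_constM mulmxV // map_rat_const1.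
have P'P : P' *m P = 1%:M by rewrite -map_rat_constM mulVmx // map_rat_const1.
have sIE : sIminus (R *m A *m invmx R) = P *m sIminus A *m P'.
  by rewrite !sIminusE mulmxBr mulmxBl -scalemxAr mulmx1 -scalemxAl PP' -!map_rat_constM.
have invE : invmx (sIminus (R *m A *m invmx R)) = P *m invmx (sIminus A) *m P'.
  have XY : sIminus (R *m A *m invmx R) *m (P *m invmx (sIminus A) *m P') = 1%:M.
    rewrite sIE !mulmxA -[_ *m P' *m P]mulmxA P'P mulmx1.
    by rewrite -(mulmxA P) mulmxV ?sIminus_unitmx // mulmx1 PP'.
  by rewrite -[invmx _]mulmx1 -XY mulKmx ?sIminus_unitmx.
rewrite /transfer invE !map_rat_constM -/P -/P' !mulmxA -[_ *m P' *m P]mulmxA P'P mulmx1.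
by rewrite -[_ *m P' *m P]mulmxA P'P mulmx1.
Qed.

End TransferFunction.

Section StateSpaceIsomorphism.
Variable C : numClosedFieldType.

Definition ctrl_mx d m (A : 'M[C]_d) (B : 'M[C]_(d, m)) := \mxrow_(k < d) (A ^+ k *m B).
Definition obs_mx d p (A : 'M[C]_d) (Cm : 'M[C]_(p, d)) := \mxcol_(k < d) (Cm *m A ^+ k).

Lemma controllable_rinv d m (A : 'M[C]_d) (B : 'M[C]_(d, m)) :
  controllable A B -> exists R, ctrl_mx A B *m R = 1%:M.
Proof.
rewrite /controllable /row_full -(eqmx_col (fun i : 'I_d => (A ^+ i *m B)^T)).1.
rewrite -tr_mxrow -/(ctrl_mx A B) -/(row_full _) => /row_fullP [X XK].
by exists X^T; rewrite -[ctrl_mx A B]trmxK -trmx_mul XK trmx1.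
Qed.

Lemma observable_linv d p (A : 'M[C]_d) (Cm : 'M[C]_(p, d)) :
  observable A Cm -> exists L, L *m obs_mx A Cm = 1%:M.
Proof.
rewrite /observable /row_full -(eqmx_col (fun i : 'I_d => Cm *m A ^+ i)).1.
by rewrite -/(obs_mx A Cm) -/(row_full _) => /row_fullP.
Qed.

Lemma intertwine_exp d1 d2 (S : 'M[C]_(d2, d1)) (A1 : 'M[C]_d1) (A2 : 'M[C]_d2) k :
  S *m A1 = A2 *m S -> S *m A1 ^+ k = A2 ^+ k *m S.
Proof.
move=> SA; elim: k => [|k IH]; first by rewrite !expr0 mulmx1 mul1mx.
by rewrite !exprS -!mulmxE mulmxA SA -mulmxA IH mulmxA.
Qed.

Lemma intertwine_ctrl_mx d m (S : 'M[C]_d) (A1 A2 : 'M[C]_d) (B1 B2 : 'M[C]_(d, m)) :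
  S *m A1 = A2 *m S -> S *m B1 = B2 -> S *m ctrl_mx A1 B1 = ctrl_mx A2 B2.
Proof.
move=> SA SB; rewrite /ctrl_mx mul_mxrow; apply: eq_mxrow => k.
by rewrite mulmxA (intertwine_exp _ SA) -mulmxA SB.
Qed.

Lemma intertwiner_unique d m (A1 A2 : 'M[C]_d) (B1 B2 : 'M[C]_(d, m)) S S' :
  controllable A1 B1 ->
  S *m A1 = A2 *m S -> S *m B1 = B2 -> S' *m A1 = A2 *m S' -> S' *m B1 = B2 ->
  S = S'.
Proof.
move=> /controllable_rinv [R KR] SA SB S'A S'B.
rewrite -[S]mulmx1 -[S']mulmx1 -KR !mulmxA.
by rewrite (intertwine_ctrl_mx SA SB) (intertwine_ctrl_mx S'A S'B).
Qed.

Lemma hankel_markov d m p (A1 A2 : 'M[C]_d) (B1 B2 : 'M[C]_(d, m))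
    (C1 C2 : 'M[C]_(p, d)) :
  (forall k, C1 *m A1 ^+ k *m B1 = C2 *m A2 ^+ k *m B2) ->
  obs_mx A1 C1 *m ctrl_mx A1 B1 = obs_mx A2 C2 *m ctrl_mx A2 B2 /\
  obs_mx A1 C1 *m A1 *m ctrl_mx A1 B1 = obs_mx A2 C2 *m A2 *m ctrl_mx A2 B2.
Proof.
move=> markovE.
have mulmx_exp (A : 'M[C]_d) i j : A ^+ i *m A ^+ j = A ^+ (i + j).
  by rewrite exprD mulmxE.
have mulmx_expS (A : 'M[C]_d) i : A ^+ i *m A = A ^+ i.+1 by rewrite exprSr mulmxE.
split.
  rewrite !mul_mxcol_mxrow; apply: eq_mxblock => i j.
  by rewrite !mulmxA -!(mulmxA _ (_ ^+ i)) !mulmx_exp markovE.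
rewrite ![obs_mx _ _ *m _]mxcol_mul !mul_mxcol_mxrow; apply: eq_mxblock => i j.
rewrite !mulmxA -!(mulmxA _ (_ ^+ i)) !mulmx_expS.
by rewrite -!(mulmxA _ (_ ^+ i.+1)) !mulmx_exp markovE.
Qed.

Lemma ctrl_mx_head d m (S : 'M[C]_d) (A1 A2 : 'M[C]_d) (B1 B2 : 'M[C]_(d, m)) :
  S *m ctrl_mx A1 B1 = ctrl_mx A2 B2 -> S *m B1 = B2.
Proof.
case: d S A1 A2 B1 B2 => [|d] S A1 A2 B1 B2; first by rewrite !flatmx0.
move/(congr1 (fun M => submxrow M ord0)).
by rewrite /ctrl_mx mul_mxrow !mxrowK /= !expr0 !mul1mx.
Qed.

Lemma obs_mx_head d p (S : 'M[C]_d) (A1 A2 : 'M[C]_d) (C1 C2 : 'M[C]_(p, d)) :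
  obs_mx A1 C1 = obs_mx A2 C2 *m S -> C1 = C2 *m S.
Proof.
case: d S A1 A2 C1 C2 => [|d] S A1 A2 C1 C2; first by rewrite !thinmx0.
move/(congr1 (fun M => submxcol M ord0)).
by rewrite /obs_mx mxcol_mul !mxcolK /= !expr0 !mulmx1.
Qed.

(* The isomorphism is [L2 O1], with [L2] a left inverse of the observability
   matrix [O2]; it maps the controllability matrix [K1] to [K2]. *)
Lemma markov_eq_similar d m p (A1 A2 : 'M[C]_d) (B1 B2 : 'M[C]_(d, m))
    (C1 C2 : 'M[C]_(p, d)) :
  (forall k, C1 *m A1 ^+ k *m B1 = C2 *m A2 ^+ k *m B2) ->
  controllable A1 B1 -> observable A1 C1 -> controllable A2 B2 -> observable A2 C2 ->
  exists S, [/\ S \in unitmx, S *m A1 = A2 *m S, S *m B1 = B2 & C1 = C2 *m S].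
Proof.
move=> markovE c1 o1 c2 o2.
have [R1 K1R1] := controllable_rinv c1; have [R2 K2R2] := controllable_rinv c2.
have [L1 L1O1] := observable_linv o1; have [L2 L2O2] := observable_linv o2.
have [OK OAK] := hankel_markov markovE.
set K1 := ctrl_mx A1 B1 in K1R1 OK OAK *; set K2 := ctrl_mx A2 B2 in K2R2 OK OAK *.
set O1 := obs_mx A1 C1 in L1O1 OK OAK *; set O2 := obs_mx A2 C2 in L2O2 OK OAK *.
pose S := L2 *m O1; pose S' := L1 *m O2.
have SK : S *m K1 = K2 by rewrite /S -mulmxA OK mulmxA L2O2 mul1mx.
have S'K : S' *m K2 = K1 by rewrite /S' -mulmxA -OK mulmxA L1O1 mul1mx.
have OS : O1 = O2 *m S.
  by rewrite -[O1]mulmx1 -K1R1 mulmxA OK -SK mulmxA -(mulmxA _ K1) K1R1 mulmx1.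
have SS' : S *m S' = 1%:M.
  by rewrite -[S *m S']mulmx1 -K2R2 mulmxA -[S *m S' *m K2]mulmxA S'K SK K2R2.
exists S; split.
- by case: (mulmx1_unit SS').
- rewrite -[S *m A1]mulmx1 -[A2 *m S]mulmx1 -K1R1 !mulmxA; congr (_ *m R1).
  have -> : S *m A1 *m K1 = L2 *m (O1 *m A1 *m K1) by rewrite /S !mulmxA.
  by rewrite OAK !mulmxA L2O2 mul1mx -SK /S !mulmxA.
- exact: ctrl_mx_head SK.
- exact: obs_mx_head OS.
Qed.

Lemma row_full_sum_mulmx d m e (X : 'I_d -> 'M[C]_(m, e)) (M : 'M[C]_e) :
  M \in unitmx ->
  row_full (\sum_(i < d) <<X i *m M>>)%MS = row_full (\sum_(i < d) <<X i>>)%MS.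
Proof.
move=> M_unit; rewrite /row_full -(eqmx_col (fun i => X i *m M)).1 -(eqmx_col X).1.
by rewrite -mxcol_mul mxrankMfree // row_free_unit.
Qed.

Lemma controllable_similar d m (A : 'M[C]_d) (B : 'M[C]_(d, m)) R :
  R \in unitmx -> controllable A B -> controllable (R *m A *m invmx R) (R *m B).
Proof.
move=> R_unit; rewrite /controllable.
have RA : R *m A = (R *m A *m invmx R) *m R by rewrite mulmxKV.
have E (i : 'I_d) :
    <<((R *m A *m invmx R) ^+ i *m (R *m B))^T>>%MS = <<(A ^+ i *m B)^T *m R^T>>%MS.
  by rewrite mulmxA -(intertwine_exp _ RA) -mulmxA trmx_mul.
by rewrite (eq_bigr _ (fun i _ => E i)) row_full_sum_mulmx ?unitmx_tr.
Qed.

Lemma observable_similar d p (A : 'M[C]_d) (Cm : 'M[C]_(p, d)) R :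
  R \in unitmx -> observable A Cm -> observable (R *m A *m invmx R) (Cm *m invmx R).
Proof.
move=> R_unit; rewrite /observable.
have RA : invmx R *m (R *m A *m invmx R) = A *m invmx R.
  by rewrite !mulmxA mulVmx // mul1mx.
have E (i : 'I_d) :
    <<Cm *m invmx R *m (R *m A *m invmx R) ^+ i>>%MS = <<Cm *m A ^+ i *m invmx R>>%MS.
  by rewrite -mulmxA (intertwine_exp _ RA) mulmxA.
by rewrite (eq_bigr _ (fun i _ => E i)) row_full_sum_mulmx ?unitmx_inv.
Qed.

End StateSpaceIsomorphism.

Section SymmetricFactorization.
Variable C : numClosedFieldType.

Lemma delta_quad_form d (T : 'M[C]_d) (i j : 'I_d) :
  ((delta_mx 0 i : 'rV_d) *m T *m (delta_mx 0 j : 'rV_d)^T) 0 0 = T i j.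
Proof. by rewrite -rowE trmx_delta -colE !mxE. Qed.

(* If [T i i = T j j = 0], the vector [e_i + e_j] gives the value [2 T i j]. *)
Lemma sym_quad_form_neq0 d (T : 'M[C]_d) : T^T = T -> T != 0 ->
  exists w : 'rV[C]_d, (w *m T *m w^T) 0 0 != 0.
Proof.
move=> T_sym /eqP T_neq0.
have [[i j] /= Tij_neq0 | T0] := pickP (fun ij : 'I_d * 'I_d => T ij.1 ij.2 != 0);
  last by case: T_neq0; apply/matrixP => i j; rewrite mxE; apply/eqP/negbFE/(T0 (i, j)).
have [Tii|Tii] := eqVneq (T i i) 0; last by exists (delta_mx 0 i); rewrite delta_quad_form.
have [Tjj|Tjj] := eqVneq (T j j) 0; last by exists (delta_mx 0 j); rewrite delta_quad_form.
have addmx00 (X Y : 'M[C]_1) : (X + Y) 0 0 = X 0 0 + Y 0 0 by rewrite mxE.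
exists (delta_mx 0 i + delta_mx 0 j).
rewrite linearD /= !mulmxDl !mulmxDr !addmx00 !delta_quad_form Tii Tjj add0r addr0.
have -> : T j i = T i j by rewrite -{1}T_sym mxE.
by rewrite -mulr2n mulrn_eq0 negb_or Tij_neq0 andbT.
Qed.

(* Split off [a^-1 v^T v] with [v = w T], [a = w T w^T], which lowers the rank;
   [sqrtC] provides the square root of [a^-1]. *)
Lemma sym_gram_factor_rank d k (T : 'M[C]_d) : T^T = T -> (\rank T <= k)%N ->
  exists R : 'M[C]_(k, d), T = R^T *m R.
Proof.
elim: k T => [|k IH] T T_sym rankT.
  by exists 0; rewrite mulmx0; apply/eqP; rewrite -mxrank_eq0 -leqn0.
have [->|T_neq0] := eqVneq T 0; first by exists 0; rewrite mulmx0.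
have [w a_neq0] := sym_quad_form_neq0 T_sym T_neq0.
set a := (w *m T *m w^T) 0 0 in a_neq0; set v := w *m T.
pose T' := T - a^-1 *: (v^T *m v).
have T'_sym : T'^T = T' by rewrite /T' linearB linearZ /= trmx_mul trmxK T_sym.
have wvT : w *m v^T = a%:M by rewrite /v trmx_mul T_sym mulmxA [LHS]mx11_scalar.
have wT' : w *m T' = 0.
  rewrite /T' mulmxBr -scalemxAr mulmxA wvT mul_scalar_mx scalerA mulVf //.
  by rewrite scale1r subrr.
have T'_sub : (T' <= T)%MS.
  have -> : T' = (1%:M - a^-1 *: (v^T *m w)) *m T.
    by rewrite mulmxBl mul1mx -scalemxAl -mulmxA.
  exact: submxMl.
have T_nsub : ~~ (T <= T')%MS.
  apply/negP => /submxP [X TX]; move: a_neq0.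
  have T'wT : T' *m w^T = 0 by rewrite -[T']T'_sym -trmx_mul wT' trmx0.
  by rewrite /a -mulmxA TX -mulmxA T'wT !mulmx0 mxE eqxx.
have /andP[_ rankT'] : (T' <= T)%MS && (\rank T' < \rank T)%N.
  by rewrite -ltmxErank ltmxE T'_sub T_nsub.
have [R' T'E] := IH T' T'_sym (leq_trans rankT' rankT).
have s_neq0 : sqrtC a != 0 by rewrite sqrtC_eq0.
suff [R TE] : exists R : 'M[C]_(1 + k, d), T = R^T *m R by exists R.
exists (col_mx ((sqrtC a)^-1 *: v) R').
rewrite tr_col_mx mul_row_col -T'E !linearZ /= -scalemxAl scalerA.
by rewrite -invfM -expr2 sqrtCK /T' addrC subrK.
Qed.

Lemma sym_gram_factor d (T : 'M[C]_d) : T^T = T -> exists R : 'M[C]_d, T = R^T *m R.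
Proof. by move=> T_sym; apply: sym_gram_factor_rank (rank_leq_row T). Qed.

End SymmetricFactorization.

Section SymmetricRealizations.
Variable C : numClosedFieldType.

Lemma trmx_exp d (A : 'M[C]_d) k : (A ^+ k)^T = A^T ^+ k.
Proof.
elim: k => [|k IH]; first by rewrite !expr0 trmx1.
by rewrite exprS [in RHS]exprSr -!mulmxE trmx_mul IH.
Qed.

Lemma controllable_tr d p (A : 'M[C]_d) (Cm : 'M[C]_(p, d)) :
  controllable A^T Cm^T = observable A Cm.
Proof.
rewrite /controllable /observable; congr (row_full _); apply: eq_bigr => i _.
by rewrite trmx_mul trmxK -trmx_exp trmxK.
Qed.

Lemma observable_tr d m (A : 'M[C]_d) (B : 'M[C]_(d, m)) :
  observable A^T B^T = controllable A B.
Proof.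
rewrite /controllable /observable; congr (row_full _); apply: eq_bigr => i _.
by rewrite trmx_mul trmx_exp.
Qed.

Lemma minimal_similar d m p (G : 'M[ratf C]_(p, m)) (A : 'M[C]_d) (B : 'M[C]_(d, m))
    (Cm : 'M[C]_(p, d)) R :
  R \in unitmx -> minimal_realization G A B Cm ->
  minimal_realization G (R *m A *m invmx R) (R *m B) (Cm *m invmx R).
Proof.
move=> R_unit [GE ctrl obs]; split.
- by rewrite /is_realization transfer_similar.
- exact: controllable_similar.
- exact: observable_similar.
Qed.

Lemma symmetric_minimal_realization d n (G : 'M[ratf C]_n) (A : 'M[C]_d)
    (B : 'M[C]_(d, n)) (Cm : 'M[C]_(n, d)) :
  G = G^T -> minimal_realization G A B Cm ->
  exists (A' : 'M[C]_d) (B' : 'M[C]_(d, n)),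
    A' = A'^T /\ minimal_realization G A' B' B'^T.
Proof.
move=> G_sym [GE ctrl obs].
have trGE : transfer A B Cm = transfer A^T Cm^T B^T by rewrite transfer_tr -GE.
have ctrl' : controllable A^T Cm^T by rewrite controllable_tr.
have obs' : observable A^T B^T by rewrite observable_tr.
have [T [T_unit TA TB CmE]] :=
  markov_eq_similar (transfer_eq_markov trGE) ctrl obs ctrl' obs'.
have TtA : T^T *m A = A^T *m T^T by rewrite -trmx_mul TA trmx_mul trmxK.
have TtB : T^T *m B = Cm^T by rewrite CmE trmx_mul trmxK.
have [R TE] := sym_gram_factor (intertwiner_unique ctrl TtA TtB TA TB).
have R_unit : R \in unitmx by move: T_unit; rewrite TE unitmx_mul => /andP[].
exists (R *m A *m invmx R), (R *m B); split; last first.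
  suff -> : (R *m B)^T = Cm *m invmx R by apply: minimal_similar.
  by rewrite CmE TE trmx_mul !mulmxA mulmxK.
have RtA : A^T *m R^T = R^T *m (R *m A *m invmx R).
  by rewrite !mulmxA -TE TA TE !mulmxA mulmxK.
by rewrite !trmx_mul trmx_inv RtA mulKmx ?unitmx_tr.
Qed.

Lemma symmetric_minimal_realizations_orthogonal d n (G : 'M[ratf C]_n)
    (A1 A2 : 'M[C]_d) (B1 B2 : 'M[C]_(d, n)) (C1 C2 : 'M[C]_(n, d)) :
  A1 = A1^T -> C1 = B1^T -> minimal_realization G A1 B1 C1 ->
  A2 = A2^T -> C2 = B2^T -> minimal_realization G A2 B2 C2 ->
  exists! S : 'M[C]_d,
    [/\ orthogonal_mx S, A2 = S *m A1 *m invmx S, B2 = S *m B1 & C2 = C1 *m invmx S].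
Proof.
move=> A1_sym C1E [GE1 ctrl1 obs1] A2_sym C2E [GE2 ctrl2 obs2].
have markovE := transfer_eq_markov (etrans (esym GE1) GE2).
have [S [S_unit SA SB C1S]] := markov_eq_similar markovE ctrl1 obs1 ctrl2 obs2.
have St_unit : S^T \in unitmx by rewrite unitmx_tr.
have S_orth : S *m S^T = 1%:M.
  have StA : A1 *m S^T = S^T *m A2 by rewrite A1_sym A2_sym -!trmx_mul SA.
  have SitA : invmx S^T *m A1 = A2 *m invmx S^T.
    rewrite -[LHS]mulmx1 -(mulmxV St_unit) mulmxA -(mulmxA _ A1) StA.
    by rewrite !mulmxA mulVmx ?mul1mx.
  have SitB : invmx S^T *m B1 = B2.
    by rewrite -[B1]trmxK -C1E C1S C2E trmx_mul trmxK mulKmx.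
  by rewrite {1}(intertwiner_unique ctrl1 SA SB SitA SitB) mulVmx.
exists S; split.
  by split=> //; rewrite ?SA ?C1S mulmxK.
move=> S' [S'_orth S'A S'B _]; have [S'_unit _] := mulmx1_unit S'_orth.
by apply: (intertwiner_unique ctrl1 SA SB); rewrite ?S'A ?mulmxKV.
Qed.

End SymmetricRealizations.

Theorem mainTheorem1 (C : numClosedFieldType) (n delta : nat)
    (G : 'M[ratf C]_n) :
  strictly_proper G -> mcmillan_degree G delta -> G = G^T ->
  (exists (A : 'M[C]_delta) (B : 'M[C]_(delta, n)) (Cm : 'M[C]_(n, delta)),
      [/\ A = A^T, Cm = B^T & minimal_realization G A B Cm])
  /\
  (forall (A1 A2 : 'M[C]_delta) (B1 B2 : 'M[C]_(delta, n))
          (C1 C2 : 'M[C]_(n, delta)),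
      A1 = A1^T -> C1 = B1^T -> minimal_realization G A1 B1 C1 ->
      A2 = A2^T -> C2 = B2^T -> minimal_realization G A2 B2 C2 ->
      exists! S : 'M[C]_delta,
        [/\ orthogonal_mx S, A2 = S *m A1 *m invmx S,
            B2 = S *m B1 & C2 = C1 *m invmx S]).
Proof.
move=> _ [A [B [Cm minG]]] G_sym; split.
  have [A' [B' [A'_sym minG']]] := symmetric_minimal_realization G_sym minG.
  by exists A', B', B'^T.
exact: symmetric_minimal_realizations_orthogonal.
Qed.
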